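(* Let $\Phi$ be a countable set of contexts and $\Xi$ a countable set of human trajectories. Let $P(\phi)$ be a probability distribution on $\Phi$, and for each $\phi\in\Phi$ let $P(\cdot\mid\phi)$ (ground truth) and $P_\theta(\cdot\mid\phi)$ (learned model) be probability distributions on $\Xi$. Fix a robot trajectory $\xi_R$ and a bounded real-valued cost $C(\xi_R\mid\xi_H,\phi)$, $\xi_H\in\Xi$, $\phi\in\Phi$. Define $$\ell(\theta)=\sum_{\phi}P(\phi)\left|\sum_{\xi_H}C(\xi_R\mid\xi_H,\phi)P(\xi_H\mid\phi)-\sum_{\xi_H}C(\xi_R\mid\xi_H,\phi)P_\theta(\xi_H\mid\phi)\right|,$$ $C_{\max}(\phi)=\sup_{\xi_H\in\Xi}|C(\xi_R\mid\xi_H,\phi)|$, and $C_{\max}=\sup_{\phi}C_{\max}(\phi)$. For a threshold $\delta>0$ with $p_\delta:=\mathbb{E}_{P(\phi)}[\mathbb{I}(C_{\max}(\phi)\ge\delta)]>0$, define the transition distribution $P_T(\phi)=P(\phi)\mathbb{I}(C_{\max}(\phi)\ge\delta)/p_\delta$ and $Q(\phi)=\tfrac12P(\phi)+\tfrac12P_T(\phi)$. Then: (i) if $\sum_\phi P(\phi)\sum_{\xi_H}|P(\xi_H\mid\phi)-P_\theta(\xi_H\mid\phi)|\le\epsilon$, then $\ell(\theta)\le C_{\max}\,\epsilon$; (ii) if $\sum_\phi Q(\phi)\sum_{\xi_H}|P(\xi_H\mid\phi)-P_\theta(\xi_H\mid\phi)|\le\epsilon$, then $\ell(\theta)\le 2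\max\big(\delta,\;C_{\max}\,\mathbb{E}_{P(\phi)}[\mathbb{I}(C_{\max}(\phi)\ge\delta)]\big)\,\epsilon$.
   Context: ''Bounded loss of $\epsilon$'' of a model on a distribution over contexts means that the expected (over that context distribution) $L^1$ distance between the ground-truth conditional distribution of future human trajectories and the model's conditional distribution is at most $\epsilon$. $\mathbb{I}$ denotes the indicator function. $\ell(\theta)$ measures, in expectation over contexts drawn from $P(\phi)$, the absolute difference between the expected cost of the fixed robot plan $\xi_R$ under the true human-trajectory distribution and under the model's distribution. *)

From HB Require Import structures.
From mathcomp Require Import all_boot all_order all_algebra.
From mathcomp Require Import all_classical all_reals all_analysis.
Set Implicit Arguments. Unset Strict Implicit. Unset Printing Implicit Defensive.
Import Order.TTheory GRing.Theory Num.Theory.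
Local Open Scope ring_scope.
Local Open Scope classical_set_scope.

(* Coincides with the usual series
   sum for absolutely summable functions. *)
Definition csum (R : realType) (T : countType) (f : T -> R) : R :=
  fine (\esum_(x in [set: T]) ((Num.max (f x) 0)%:E)) -
  fine (\esum_(x in [set: T]) ((Num.max (- f x) 0)%:E)).

Definition is_distr (R : realType) (T : countType) (p : T -> R) : Prop :=
  (forall x, 0 <= p x) /\ (\esum_(x in [set: T]) (p x)%:E = 1%E).

From HB Require Import structures.
From mathcomp Require Import all_boot all_order all_algebra.
From mathcomp Require Import all_classical all_reals all_analysis.
From mathcomp Require Import ring lra.
Import Order.TTheory GRing.Theory Num.Theory.
Local Open Scope ring_scope.
Local Open Scope classical_set_scope.

(* At a context phi the cost is bounded by C_max(phi) in absolute value, so the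
   two expected costs differ by at most C_max(phi) d(phi), where d(phi) is the
   L1 distance between the true and the learned trajectory distributions.
   Averaging over P(phi) with C_max(phi) <= C_max gives (i).  For (ii),
   C_max(phi) <= delta + C_max I(C_max(phi) >= delta), so the loss is at most
   delta E_P[d] + C_max E_P[I d]; up to the factors 1/2 and 1/(2 p_delta) these
   are the two halves of E_Q[d] <= eps. *)

Section countable_sum.
Context {R : realType} {T : countType}.
Implicit Types (f g u v : T -> R).

Let esumR f := \esum_(x in [set: T]) (f x)%:E.

Definition rsummable f := summable [set: T] (EFin \o f).

Lemma esumZ_EFin (c : R) f : 0 <= c -> esumR (fun x => c * f x) = (c%:E * esumR f)%E.
Proof.
move=> c0; rewrite /esumR /esum -ereal_supZl //; last first.
  by apply/set0P; exists 0%E, set0; [exact: fsets_set0 | rewrite fsbig_set0].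
congr ereal_sup; apply/seteqP; split.
- move=> _ [A [finA _] <-]; exists (\sum_(x \in A) (f x)%:E)%E; first by exists A.
  by rewrite !fsumEFin // -EFinM mulr_fsumr.
- move=> _ [_ [A [finA _] <-] <-]; exists A => //.
  by rewrite !fsumEFin // -EFinM mulr_fsumr.
Qed.

Lemma rsummable_dom (c : R) f g : 0 <= c ->
  (forall x, `|f x| <= c * `|g x|) -> rsummable g -> rsummable f.
Proof.
move=> c0 fg sg; apply: (le_lt_trans (y := esumR (fun x => c * `|g x|))).
  by apply: le_esum => x _; rewrite lee_fin.
rewrite esumZ_EFin //; have := sg; rewrite /rsummable summableE.
by rewrite /esumR => /fineK <-; rewrite -EFinM ltry.
Qed.

Lemma ge0_csumE f : (forall x, 0 <= f x) -> csum f = fine (esumR f).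
Proof.
move=> f0; rewrite /csum [X in _ - fine X]esum1 => [|x _]; last first.
  by rewrite (max_idPr _) // oppr_le0.
by rewrite subr0; congr fine; apply: eq_esum => x _; rewrite (max_idPl (f0 x)).
Qed.

Lemma csum_ge0 f : (forall x, 0 <= f x) -> 0 <= csum f.
Proof.
move=> f0; rewrite ge0_csumE //; apply/fine_ge0/esum_ge0 => x _.
by rewrite lee_fin.
Qed.

Lemma csum_funrposBneg f : csum f = csum f^\+ - csum f^\-.
Proof. by rewrite [csum f^\+]ge0_csumE // [csum f^\-]ge0_csumE. Qed.

Lemma ge0_esum_csum u : (forall x, 0 <= u x) -> rsummable u -> esumR u = (csum u)%:E.
Proof.
move=> u0 su; rewrite ge0_csumE // fineK //.
rewrite /esumR (eq_esum (b := fun x => `|(EFin \o u) x|)%E) -?summableE // => x _.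
by rewrite /= ger0_norm.
Qed.

Lemma rsummableD f g : rsummable f -> rsummable g -> rsummable (fun x => f x + g x).
Proof. exact: summableD. Qed.

Lemma rsummableN f : rsummable (fun x => - f x) = rsummable f.
Proof. by rewrite [RHS]summableN. Qed.

Lemma rsummableZ (c : R) f : rsummable f -> rsummable (fun x => c * f x).
Proof. by apply: (rsummable_dom `|c|) => // x; rewrite normrM. Qed.

Lemma rsummable_norm f : rsummable f -> rsummable (fun x => `|f x|).
Proof. by apply: (rsummable_dom 1) => // x; rewrite mul1r normr_id. Qed.

Lemma rsummable_funrpos f : rsummable f -> rsummable f^\+.
Proof.
apply: (rsummable_dom 1) => // x.
by rewrite mul1r ger0_norm // ge_max ler_norm normr_ge0.
Qed.

Lemma rsummable_funrneg f : rsummable f -> rsummable f^\-.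
Proof. by rewrite -rsummableN -funrposN; exact: rsummable_funrpos. Qed.

Lemma ge0_csumD u v : (forall x, 0 <= u x) -> (forall x, 0 <= v x) ->
  rsummable u -> rsummable v -> csum (fun x => u x + v x) = csum u + csum v.
Proof.
move=> u0 v0 su sv; have uv0 x : 0 <= u x + v x by rewrite addr_ge0.
apply: EFin_inj; rewrite [RHS]EFinD -!ge0_esum_csum //; last exact: rsummableD.
rewrite /esumR; under eq_esum do rewrite EFinD.
by apply: esumD => x _; rewrite lee_fin.
Qed.

Lemma ge0_csumB u v : (forall x, 0 <= u x) -> (forall x, 0 <= v x) ->
  rsummable u -> rsummable v -> csum (fun x => u x - v x) = csum u - csum v.
Proof.
move=> u0 v0 su sv; set f := fun x => u x - v x.
have sf : rsummable f by apply: rsummableD; rewrite ?rsummableN.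
have u0' x : (0 <= (u x)%:E)%E by rewrite lee_fin.
have v0' x : (0 <= (v x)%:E)%E by rewrite lee_fin.
have posE : ((EFin \o u) \- (EFin \o v))^\+%E = EFin \o f^\+.
  by apply/funext => x; rewrite funeposE /= -EFinB EFin_max.
have negE : ((EFin \o u) \- (EFin \o v))^\-%E = EFin \o f^\-.
  by apply/funext => x; rewrite funenegE /= EFin_max.
have e : (esumR (funrpos f) - esumR (funrneg f) = esumR u - esumR v)%E.
  by move: (esumB su sv (fun x _ => u0' x) (fun x _ => v0' x)); rewrite posE negE.
move: e; rewrite !ge0_esum_csum //; last 2 first.
- exact: rsummable_funrneg.
- exact: rsummable_funrpos.
by rewrite -!EFinB => -[<-]; rewrite csum_funrposBneg.
Qed.

Lemma csumD f g : rsummable f -> rsummable g ->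
  csum (fun x => f x + g x) = csum f + csum g.
Proof.
move=> sf sg; have posneg (h : T -> R) x : h^\+ x - h^\- x = h x.
  by have /= := congr1 (@^~ x) (funrposBneg h).
have -> : (fun x => f x + g x) = fun x => (f^\+ x + g^\+ x) - (f^\- x + g^\- x).
  by apply/funext => x; rewrite -(posneg f x) -(posneg g x) addrACA opprD.
have [spf spg] := (rsummable_funrpos _ sf, rsummable_funrpos _ sg).
have [snf sng] := (rsummable_funrneg _ sf, rsummable_funrneg _ sg).
rewrite ge0_csumB ?ge0_csumD //; last 4 first.
- by move=> x; rewrite addr_ge0.
- by move=> x; rewrite addr_ge0.
- exact: rsummableD.
- exact: rsummableD.
by rewrite (csum_funrposBneg f) (csum_funrposBneg g); lra.
Qed.

Lemma csumN f : csum (fun x => - f x) = - csum f.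
Proof. by rewrite csum_funrposBneg funrposN funrnegN (csum_funrposBneg f) [RHS]opprB. Qed.

Lemma csumZ (c : R) f : 0 <= c -> rsummable f ->
  csum (fun x => c * f x) = c * csum f.
Proof.
move=> c0 sf; have csumZ_ge0 u : (forall x, 0 <= u x) -> rsummable u ->
    csum (fun x => c * u x) = c * csum u.
  move=> u0 su; apply: EFin_inj; rewrite [RHS]EFinM -!ge0_esum_csum ?esumZ_EFin //.
    by move=> x; rewrite mulr_ge0.
  exact: rsummableZ.
rewrite csum_funrposBneg ge0_funrposM // ge0_funrnegM // (csum_funrposBneg f) mulrBr.
by rewrite !csumZ_ge0 //; [exact: rsummable_funrneg | exact: rsummable_funrpos].
Qed.

Lemma ler_csum f g : rsummable f -> rsummable g -> (forall x, f x <= g x) ->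
  csum f <= csum g.
Proof.
move=> sf sg fg; rewrite -subr_ge0 -csumN -csumD ?rsummableN //.
by apply: csum_ge0 => x; rewrite subr_ge0.
Qed.

Lemma ler_norm_csum f : rsummable f -> `|csum f| <= csum (fun x => `|f x|).
Proof.
move=> sf; have sn := rsummable_norm _ sf.
rewrite ler_norml -csumN; apply/andP; split; apply: ler_csum; rewrite ?rsummableN //.
- by move=> x; rewrite lerNl -normrN ler_norm.
- by move=> x; rewrite ler_norm.
Qed.

Lemma is_distr_rsummable (p : T -> R) : is_distr p -> rsummable p.
Proof.
case=> p0 p1; rewrite /rsummable /summable (eq_esum (b := fun x => (p x)%:E)).
  by rewrite p1 ltry.
by move=> x _; rewrite /= ger0_norm.
Qed.

Lemma is_distr_csum (p : T -> R) : is_distr p -> csum p = 1.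
Proof. by case=> p0 p1; rewrite ge0_csumE // /esumR p1. Qed.

End countable_sum.

Section l1_distance.
Context {R : realType} {T : countType}.
Implicit Types (c p q : T -> R).

Definition l1dist p q := csum (fun x => `|p x - q x|).

Lemma rsummable_l1 p q : rsummable p -> rsummable q ->
  rsummable (fun x => `|p x - q x|).
Proof. by move=> sp sq; apply/rsummable_norm/rsummableD; rewrite ?rsummableN. Qed.

Lemma l1dist_ge0 p q : 0 <= l1dist p q.
Proof. exact: csum_ge0. Qed.

Lemma l1dist_le2 p q : is_distr p -> is_distr q -> l1dist p q <= 2.
Proof.
move=> dp dq; have [[p0 _] [q0 _]] := (dp, dq).
have [sp sq] := (is_distr_rsummable _ dp, is_distr_rsummable _ dq).
have <- : csum (fun x => p x + q x) = 2.
  by rewrite csumD // !is_distr_csum.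
apply: ler_csum; [exact: rsummable_l1 | exact: rsummableD |] => x.
by apply: le_trans (ler_normB _ _) _; rewrite !ger0_norm.
Qed.

Lemma ler_norm_csumB_l1dist c p q (B : R) : 0 <= B -> (forall x, `|c x| <= B) ->
  rsummable p -> rsummable q ->
  `|csum (fun x => c x * p x) - csum (fun x => c x * q x)| <= B * l1dist p q.
Proof.
move=> B0 cB sp sq.
have scM (r : T -> R) : rsummable r -> rsummable (fun x => c x * r x).
  by apply: (rsummable_dom B) => // x; rewrite normrM ler_wpM2r.
rewrite -csumN -csumD ?rsummableN ?scM //.
apply: (le_trans (ler_norm_csum _ _)).
  by apply: rsummableD; rewrite ?rsummableN ?scM.
rewrite /l1dist -csumZ //; last exact: rsummable_l1.
apply: ler_csum.
- by apply/rsummable_norm/rsummableD; rewrite ?rsummableN ?scM.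
- by apply/rsummableZ/rsummable_l1.
by move=> x; rewrite -mulrBr normrM ler_wpM2r.
Qed.

End l1_distance.

Lemma sup_range_bounds (R : realType) (X : Type) (g : X -> R) (B : R) :
  0 <= B -> (forall x, 0 <= g x) -> (forall x, g x <= B) ->
  [/\ 0 <= sup (range g), sup (range g) <= B & forall x, g x <= sup (range g)].
Proof.
move=> B0 g0 gB; have ub : has_ubound (range g) by exists B => _ [x _ <-].
have g_le x : g x <= sup (range g) by apply: ub_le_sup => //; exists x.
have [[x _]|/forallNP X0] := pselect (exists x : X, True).
- split => //; first exact: le_trans (g0 x) (g_le x).
  by apply: ge_sup => [|z [y _ <-]]; [exists (g x), x|].
- have -> : range g = set0 by apply/seteqP; split => // z [x _ _]; exact: (X0 x).
  by rewrite sup0; split => // x; case: (X0 x).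
Qed.

Lemma ler_max_mixture (R : realFieldType) (a b p s t e : R) :
  0 <= a -> 0 < p -> 0 <= s -> 0 <= t ->
  2^-1 * s + 2^-1 / p * t <= e -> a * s + b * t <= 2 * Num.max a (b * p) * e.
Proof.
move=> a0 p0 s0 t0; set m := Num.max a (b * p); set u := t / p.
have [am bm] : a <= m /\ b * p <= m by split; rewrite le_max lexx ?orbT.
have u0 : 0 <= u by rewrite divr_ge0 // ltW.
have -> : 2^-1 / p * t = 2^-1 * u by rewrite /u mulrAC -mulrA.
have -> : b * t = b * p * u by rewrite /u; field; rewrite gt_eqF.
move=> he.
have : 0 <= (m - a) * s by rewrite mulr_ge0 // subr_ge0.
have : 0 <= (m - b * p) * u by rewrite mulr_ge0 // subr_ge0.
have : 0 <= m * (e - (2^-1 * s + 2^-1 * u)) by rewrite mulr_ge0 ?subr_ge0 ?(le_trans a0).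
lra.
Qed.

Section prediction_loss.
Context {R : realType} {Phi Xi : countType}.
Variables (w : Phi -> R) (P Pt c : Phi -> Xi -> R) (M : R).
Hypotheses (w_distr : is_distr w) (P_distr : forall phi, is_distr (P phi))
  (Pt_distr : forall phi, is_distr (Pt phi)) (M_ge0 : 0 <= M)
  (c_le : forall phi x, `|c phi x| <= M).

Definition cost_sup phi := sup (range (fun x => `|c phi x|)).

Definition cost_max := sup (range cost_sup).

Definition loss := csum (fun phi => w phi *
  `|csum (fun x => c phi x * P phi x) - csum (fun x => c phi x * Pt phi x)|).

Let err phi := l1dist (P phi) (Pt phi).

Lemma cost_sup_bounds phi : [/\ 0 <= cost_sup phi, cost_sup phi <= M &
  forall x, `|c phi x| <= cost_sup phi].
Proof. exact: sup_range_bounds. Qed.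

Lemma cost_max_bounds : [/\ 0 <= cost_max, cost_max <= M &
  forall phi, cost_sup phi <= cost_max].
Proof. by apply: sup_range_bounds => // phi; case: (cost_sup_bounds phi). Qed.

Lemma rsummable_weighted (B : R) (g : Phi -> R) : (forall phi, `|g phi| <= B) ->
  rsummable (fun phi => w phi * g phi).
Proof.
move=> gB; apply: (rsummable_dom `|B|) (is_distr_rsummable _ w_distr) => // phi.
by rewrite normrM mulrC ler_wpM2r // (le_trans (gB phi)) ?ler_norm.
Qed.

Let w_ge0 phi : 0 <= w phi. Proof. by case: w_distr. Qed.

Let err_bounds phi : 0 <= err phi <= 2.
Proof. by rewrite l1dist_ge0 l1dist_le2. Qed.

Let w_err_summable : rsummable (fun phi => w phi * err phi).
Proof.
apply: (rsummable_weighted 2) => phi.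
by have /andP[e0 e2] := err_bounds phi; rewrite ger0_norm.
Qed.

Let w_cost_err_summable : rsummable (fun phi => w phi * (cost_sup phi * err phi)).
Proof.
apply: (rsummable_weighted (M * 2)) => phi.
have [cs0 csM _] := cost_sup_bounds phi; have /andP[e0 e2] := err_bounds phi.
by rewrite ger0_norm ?mulr_ge0 // ler_pM.
Qed.

Lemma cost_gap_le phi :
  `|csum (fun x => c phi x * P phi x) - csum (fun x => c phi x * Pt phi x)|
  <= cost_sup phi * err phi.
Proof.
have [cs0 _ c_cs] := cost_sup_bounds phi.
by apply: ler_norm_csumB_l1dist => //; apply: is_distr_rsummable.
Qed.

Lemma loss_le_weighted : loss <= csum (fun phi => w phi * (cost_sup phi * err phi)).
Proof.
apply: ler_csum => // [|phi]; last by rewrite ler_wpM2l // cost_gap_le.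
apply: (rsummable_weighted (M * 2)) => phi; rewrite normr_id.
apply: (le_trans (cost_gap_le phi)).
have [cs0 csM _] := cost_sup_bounds phi; have /andP[e0 e2] := err_bounds phi.
by rewrite ler_pM.
Qed.

Lemma loss_le_cost_max eps : csum (fun phi => w phi * err phi) <= eps ->
  loss <= cost_max * eps.
Proof.
have [Cm0 _ cs_le] := cost_max_bounds.
move=> h; apply: (le_trans loss_le_weighted); apply: le_trans (ler_wpM2l Cm0 h).
rewrite -csumZ //; apply: ler_csum => [||phi]; rewrite ?rsummableZ //.
have /andP[e0 _] := err_bounds phi.
by rewrite mulrCA ler_wpM2r ?mulr_ge0.
Qed.

Definition above_threshold delta phi : R := if delta <= cost_sup phi then 1 else 0.

Definition transition_mass delta := csum (fun phi => w phi * above_threshold delta phi).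

Definition transition delta phi := w phi * above_threshold delta phi / transition_mass delta.

Definition mixture delta phi := 2^-1 * w phi + 2^-1 * transition delta phi.

Lemma cost_sup_le_threshold delta phi : 0 < delta ->
  cost_sup phi <= delta + cost_max * above_threshold delta phi.
Proof.
move=> d0; have [_ _ /(_ phi) cs_le] := cost_max_bounds; rewrite /above_threshold.
by case: (leP delta (cost_sup phi)) => h; [rewrite mulr1 | rewrite mulr0]; lra.
Qed.

Let w_above_err_summable delta :
  rsummable (fun phi => w phi * (above_threshold delta phi * err phi)).
Proof.
apply: (rsummable_weighted 2) => phi; have /andP[e0 e2] := err_bounds phi.
by rewrite /above_threshold; case: ifP; rewrite ?mul1r ?mul0r ?normr0 ?ger0_norm.
Qed.

Lemma loss_le_threshold_split delta : 0 < delta ->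
  loss <= delta * csum (fun phi => w phi * err phi)
          + cost_max * csum (fun phi => w phi * (above_threshold delta phi * err phi)).
Proof.
move=> d0; have [Cm0 _ _] := cost_max_bounds.
rewrite -csumZ ?(ltW d0) // -csumZ // -csumD ?rsummableZ //.
apply: (le_trans loss_le_weighted); apply: ler_csum => [||phi].
- exact: w_cost_err_summable.
- by apply: rsummableD; apply: rsummableZ.
have /andP[e0 _] := err_bounds phi.
have : 0 <= (delta + cost_max * above_threshold delta phi - cost_sup phi)
            * (w phi * err phi).
  by rewrite mulr_ge0 ?(mulr_ge0 (w_ge0 phi) e0) // subr_ge0 cost_sup_le_threshold.
lra.
Qed.

Lemma csum_mixture_err delta :
  csum (fun phi => mixture delta phi * err phi) =
  2^-1 * csum (fun phi => w phi * err phi)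
  + 2^-1 / transition_mass delta
    * csum (fun phi => w phi * (above_threshold delta phi * err phi)).
Proof.
have tm0 : 0 <= transition_mass delta.
  by apply: csum_ge0 => phi; rewrite /above_threshold; case: ifP; rewrite ?mulr1 ?mulr0.
have -> : (fun phi => mixture delta phi * err phi) = fun phi =>
    2^-1 * (w phi * err phi) + 2^-1 / transition_mass delta
      * (w phi * (above_threshold delta phi * err phi)).
  by apply/funext => phi; rewrite /mixture /transition; ring.
by rewrite csumD ?rsummableZ // !csumZ // divr_ge0.
Qed.

Lemma loss_le_mixture delta : 0 < delta -> 0 < transition_mass delta ->
  forall eps, csum (fun phi => mixture delta phi * err phi) <= eps ->
  loss <= 2 * Num.max delta (cost_max * transition_mass delta) * eps.
Proof.
move=> d0 tm0 eps; rewrite csum_mixture_err => h.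
apply: le_trans (loss_le_threshold_split delta d0) _.
apply: ler_max_mixture h => //; [exact: ltW | |]; apply: csum_ge0 => phi;
  have /andP[e0 _] := err_bounds phi; rewrite mulr_ge0 //.
by rewrite /above_threshold; case: ifP; rewrite ?mul1r ?mul0r.
Qed.

End prediction_loss.

Theorem lemma1 (R : realType) (Phi Xi : countType) (TR : Type)
  (Pphi : Phi -> R) (P Ptheta : Phi -> Xi -> R)
  (C : TR -> Xi -> Phi -> R) (xiR : TR) (delta : R) :
  is_distr Pphi ->
  (forall phi, is_distr (P phi)) ->
  (forall phi, is_distr (Ptheta phi)) ->
  (exists M : R, forall xiH phi, `|C xiR xiH phi| <= M) ->
  let ell : R :=
    csum (fun phi => Pphi phi *
      `| csum (fun xiH => C xiR xiH phi * P phi xiH)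
         - csum (fun xiH => C xiR xiH phi * Ptheta phi xiH) |) in
  let Cmaxphi : Phi -> R := fun phi => sup (range (fun xiH => `|C xiR xiH phi|)) in
  let Cmax : R := sup (range Cmaxphi) in
  let pdelta : R := csum (fun phi => Pphi phi * (if delta <= Cmaxphi phi then 1 else 0)) in
  let PT : Phi -> R := fun phi => Pphi phi * (if delta <= Cmaxphi phi then 1 else 0) / pdelta in
  let Q : Phi -> R := fun phi => 2^-1 * Pphi phi + 2^-1 * PT phi in
  0 < delta -> 0 < pdelta ->
  (forall eps : R,
     csum (fun phi => Pphi phi * csum (fun xiH => `|P phi xiH - Ptheta phi xiH|)) <= eps ->
     ell <= Cmax * eps) /\
  (forall eps : R,
     csum (fun phi => Q phi * csum (fun xiH => `|P phi xiH - Ptheta phi xiH|)) <= eps ->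
     ell <= 2 * Num.max delta (Cmax * pdelta) * eps).
Proof.
move=> w_d P_d Pt_d [M0 C_le] ell Cmaxphi Cmax pdelta PT Q d0 pd0.
have M_ge0 : 0 <= Num.max M0 0 by rewrite le_max lexx orbT.
pose c phi xiH := C xiR xiH phi.
have c_le phi xiH : `|c phi xiH| <= Num.max M0 0 by rewrite le_max C_le.
split.
- exact: (loss_le_cost_max _ _ _ _ _ w_d P_d Pt_d M_ge0 c_le).
- exact: (loss_le_mixture _ _ _ _ _ w_d P_d Pt_d M_ge0 c_le _ d0 pd0).
Qed.
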